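(* Let $k$ be an algebraically closed field, $R$ a finitely generated commutative $k$-algebra, $M$ a Noetherian $R$-module, $y=(y_1,\ldots,y_m)$ an $m$-tuple in $R$ and $y'=(y_1,\ldots,y_{m-1})$. Then $\sigma(y',M)=\pi(\sigma(y,M))$, where $\pi:k^m\to k^{m-1}$ is the projection onto the first $m-1$ coordinates.
   Context: For a commutative $k$-algebra $R$, an $R$-module $M$ and an $n$-tuple $y$ in $R$, the Koszul complex $\operatorname{Kos}(y,M)$ is $0\leftarrow M\leftarrow M\otimes_k\wedge^1k^n\leftarrow\cdots\leftarrow M\otimes_k\wedge^nk^n\leftarrow 0$ with differential $\partial(u\otimes e_{i_1}\wedge\cdots\wedge e_{i_p})=\sum_{s=1}^p(-1)^{s+1}y_{i_s}u\otimes e_{i_1}\wedge\cdots\wedge\widehat{e_{i_s}}\wedge\cdots\wedge e_{i_p}$. For $a\in k^n$, $y-a=(y_1-a_1,\ldots,y_n-a_n)$. The Taylor spectrum $\sigma(y,M)$ is the set of $a\in k^n$ such that $\operatorname{Kos}(y-a,M)$ is not exact. *)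

From HB Require Import structures.
From mathcomp Require Import all_boot all_order all_algebra.
Set Implicit Arguments. Unset Strict Implicit. Unset Printing Implicit Defensive.
Import Order.TTheory GRing.Theory Num.Theory.
Local Open Scope ring_scope.

Definition subalg_closedP (k : fieldType) (R : comAlgType k) (P : R -> Prop) :=
  [/\ P 1, (forall x y, P x -> P y -> P (x + y)),
      (forall x y, P x -> P y -> P (x * y)) &
      (forall (a : k) x, P x -> P (a *: x))].

Definition fg_algebra (k : fieldType) (R : comAlgType k) : Prop :=
  exists gens : seq R,
    forall P : R -> Prop, subalg_closedP P -> (forall g, g \in gens -> P g) ->
      forall x, P x.

Definition submoduleP (R : comNzRingType) (M : lmodType R) (P : M -> Prop) :=
  [/\ P 0, (forall x y, P x -> P y -> P (x + y)) &
      (forall (r : R) x, P x -> P (r *: x))].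

Definition fg_submodule (R : comNzRingType) (M : lmodType R) (P : M -> Prop) :=
  exists s : seq M, forall x, P x <->
    exists r : 'I_(size s) -> R, x = \sum_(i < size s) r i *: s`_i.

Definition noetherian_module (R : comNzRingType) (M : lmodType R) : Prop :=
  forall P : M -> Prop, submoduleP P -> fg_submodule P.

(** A chain of Kos(y,M) in degree p is an element of
    M (x) /\^p k^n, i.e. a family (u_S) of elements of M indexed by the subsets
    S of {0,..,n-1} with #|S| = p (u_S is the coefficient of
    e_{i_1} /\ ... /\ e_{i_p}, i_1 < ... < i_p, S = {i_1,...,i_p}).
    We put all degrees together as functions {set 'I_n} -> M. *)
Definition homog (R : comNzRingType) (M : lmodType R) (n p : nat)
    (c : {ffun {set 'I_n} -> M}) : Prop :=
  forall S : {set 'I_n}, #|S| != p -> c S = 0.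

(* d(u e_{i_1}/\../\e_{i_p}) = sum_s (-1)^(s+1) y_{i_s} u e_{..^i_s..}:
   the coefficient at T of d c collects, for each i \notin T, the term
   coming from S = i |: T, where i sits at position s with
   s - 1 = #{j in T | j < i}. *)
Definition koszul_d (R : comNzRingType) (M : lmodType R) (n : nat)
    (y : 'I_n -> R) (c : {ffun {set 'I_n} -> M}) : {ffun {set 'I_n} -> M} :=
  [ffun T : {set 'I_n} =>
     \sum_(i < n | i \notin T)
        (((-1) ^+ #|[set j in T | (j < i)%N]| * y i) *: c (i |: T))].

(* In degree 0 every
   chain is a cycle, so this includes surjectivity of M <- M (x) k^n; in
   degree n it says d_n is injective. *)
Definition koszul_exact (R : comNzRingType) (M : lmodType R) (n : nat)
    (y : 'I_n -> R) : Prop :=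
  forall (p : nat) (c : {ffun {set 'I_n} -> M}),
    homog p c -> koszul_d y c = 0 ->
    exists d : {ffun {set 'I_n} -> M}, homog p.+1 d /\ koszul_d y d = c.

Definition shift_tuple (k : fieldType) (R : comAlgType k) (n : nat)
    (y : 'I_n -> R) (a : 'I_n -> k) : 'I_n -> R :=
  fun i => y i - (a i)%:A.

Definition taylor_spectrum (k : fieldType) (R : comAlgType k) (M : lmodType R)
    (n : nat) (y : 'I_n -> R) (a : 'I_n -> k) : Prop :=
  ~ koszul_exact M (shift_tuple y a).

Definition proj_first (k : Type) (m : nat) (a : 'I_m.+1 -> k) : 'I_m -> k :=
  fun i => a (widen_ord (leqnSn m) i).

Definition drop_last (T : Type) (m : nat) (y : 'I_m.+1 -> T) : 'I_m -> T :=
  fun i => y (widen_ord (leqnSn m) i).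

From HB Require Import structures.
From mathcomp Require Import all_boot all_order all_algebra.
From mathcomp Require Import ring ring_quotient generic_quotient.
From mathcomp Require boolp classical_sets.
Set Implicit Arguments. Unset Strict Implicit. Unset Printing Implicit Defensive.
Import Order.TTheory GRing.Theory Num.Theory.
Local Open Scope ring_scope.

(** For a finitely generated module, Kos(z, M) is exact iff M = z_1 M + ...
    + z_n M: degree 0 exactness says exactly this, and conversely Nakayama's
    lemma yields r = 1 mod (z) with r M = 0, while the homotopy formula
    d (e_i /\ c) + e_i /\ d c = z_i c shows that (z) kills homology.
    So a is in sigma(y, M) iff M != (y - a) M (koszul_exactP).

    One inclusion is then immediate, (y' - b) M being contained in (y - a) M.
    For the other, if M != (y' - b) M then J = {r | r M in (y' - b) M} is a
    proper ideal; the weak Nullstellensatz (maximal ideals by Zorn, residue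
    fields equal to k by Zariski's lemma) gives c with y_(m+1) - c
    non-invertible modulo J, and Nakayama shows M != (y - (b, c)) M. *)

Section IdealsAndSubmodules.
Variable R : comNzRingType.

Definition idealP (I : R -> Prop) : Prop :=
  [/\ I 0, (forall a b, I a -> I b -> I (a + b)) & (forall r a, I a -> I (r * a))].

Lemma idealB I : idealP I -> forall a b, I a -> I b -> I (a - b).
Proof. by case=> _ ID IM a b Ia Ib; apply: ID => //; rewrite -mulN1r; apply: IM. Qed.

Lemma ideal_sum I (J : finType) (f : J -> R) :
  idealP I -> (forall j, I (f j)) -> I (\sum_j f j).
Proof. by case=> I0 ID _ h; elim/big_rec: _ => // j x _; apply: ID. Qed.

Variable M : lmodType R.

Lemma submod_sum L (J : finType) (f : J -> M) :
  submoduleP L -> (forall j, L (f j)) -> L (\sum_j f j).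
Proof. by case=> L0 LD _ h; elim/big_rec: _ => // j x _; apply: LD. Qed.

Definition gen_ideal n (z : 'I_n -> R) (a : R) : Prop :=
  exists t : 'I_n -> R, a = \sum_i z i * t i.

Definition gen_submod n (z : 'I_n -> R) (x : M) : Prop :=
  exists m : 'I_n -> M, x = \sum_i z i *: m i.

Definition ideal_submod (I : R -> Prop) (x : M) : Prop :=
  exists N (a : 'I_N -> R) (m : 'I_N -> M),
    (forall i, I (a i)) /\ x = \sum_i a i *: m i.

Definition spanned_by (s : seq M) : Prop :=
  forall x : M, exists a : 'I_(size s) -> R, x = \sum_i a i *: s`_i.

Lemma gen_idealP n (z : 'I_n -> R) : idealP (gen_ideal z).
Proof.
split; first by exists (fun _ => 0); rewrite big1 // => i _; rewrite mulr0.
  move=> _ _ [ta ->] [tb ->]; exists (fun i => ta i + tb i).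
  by rewrite -big_split; apply: eq_bigr => i _; rewrite mulrDr.
move=> r _ [t ->]; exists (fun i => r * t i).
by rewrite mulr_sumr; apply: eq_bigr => i _; rewrite mulrCA.
Qed.

Lemma gen_ideal_gen n (z : 'I_n -> R) i : gen_ideal z (z i).
Proof.
exists (fun j => (j == i)%:R); rewrite (bigD1 i) //= eqxx mulr1 big1 ?addr0 //.
by move=> j /negbTE ->; rewrite mulr0.
Qed.

Lemma gen_submodP n (z : 'I_n -> R) : submoduleP (gen_submod z).
Proof.
split; first by exists (fun _ => 0); rewrite big1 // => i _; rewrite scaler0.
  move=> _ _ [mu ->] [mv ->]; exists (fun i => mu i + mv i).
  by rewrite -big_split; apply: eq_bigr => i _; rewrite scalerDr.
move=> r _ [m ->]; exists (fun i => r *: m i).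
by rewrite scaler_sumr; apply: eq_bigr => i _; rewrite !scalerA mulrC.
Qed.

Lemma gen_submod_ideal_submod n (z : 'I_n -> R) x :
  gen_submod z x -> ideal_submod (gen_ideal z) x.
Proof. by case=> m ->; exists n, z, m; split=> // i; apply: gen_ideal_gen. Qed.

End IdealsAndSubmodules.

Section KoszulHomotopy.
Variables (R : comNzRingType) (M : lmodType R) (n : nat) (z : 'I_n -> R).
Implicit Types (T : {set 'I_n}) (c : {ffun {set 'I_n} -> M}).

(** The sign by which e_i moves past the e_j, j in T, j < i. *)
Definition ksign T (i : 'I_n) : R := (-1) ^+ #|[set j in T | (j < i)%N]|.

Definition sign_of (b : bool) : R := if b then -1 else 1.

Lemma ksign_sq T i : ksign T i * ksign T i = 1.
Proof. by rewrite /ksign -exprD -signr_odd oddD addbb. Qed.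

Lemma ksignU1 T (j i : 'I_n) : j \notin T ->
  ksign (j |: T) i = sign_of (j < i)%N * ksign T i.
Proof.
move=> jT; rewrite /ksign /sign_of.
have -> : [set l in j |: T | (l < i)%N] =
   if (j < i)%N then j |: [set l in T | (l < i)%N] else [set l in T | (l < i)%N].
  apply/setP=> l; case: ifP => ji; rewrite !inE;
  case: (l =P j) => [->|] //=; rewrite ?ji //.
  by rewrite (negbTE jT).
case: ltnP => ji; last by rewrite mul1r.
by rewrite cardsU1 inE (negbTE jT) /= exprS.
Qed.

Lemma sign_of_swap (i j : 'I_n) : i != j ->
  sign_of (j < i)%N * sign_of (i < j)%N = -1.
Proof.
move=> ij; rewrite /sign_of; case: (ltngtP j i) => h /=; rewrite ?mulN1r ?mulr1 ?mul1r //.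
by move: ij; rewrite -(inj_eq val_inj) /= h eqxx.
Qed.

Definition wedge (i : 'I_n) c : {ffun {set 'I_n} -> M} :=
  [ffun S : {set 'I_n} => if i \in S then ksign (S :\ i) i *: c (S :\ i) else 0].

Lemma koszul_dE c T :
  koszul_d z c T = \sum_(i < n | i \notin T) ((ksign T i * z i) *: c (i |: T)).
Proof. by rewrite ffunE. Qed.

Lemma setU1D1 T (i j : 'I_n) : j != i -> (j |: T) :\ i = j |: (T :\ i).
Proof.
move=> ji; apply/setP=> l; rewrite !inE; case: (l =P i) => [->|_] /=;
  by rewrite ?(negbTE ji) // eq_sym (negbTE ji).
Qed.

(** The terms j != i of d (e_i /\ c) and e_i /\ d c cancel pairwise. *)
Lemma wedge_d_cancel (i j : 'I_n) c T : i \in T -> j \notin T ->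
  (ksign T j * z j) *: wedge i c (j |: T) +
  ksign (T :\ i) i *: ((ksign (T :\ i) j * z j) *: c (j |: T :\ i)) = 0.
Proof.
move=> iT jT; rewrite ffunE !inE iT orbT.
have ji : j != i by apply: contraNneq jT => ->.
have jT' : j \notin T :\ i by rewrite !inE negb_and jT orbT.
rewrite setU1D1 // ksignU1 // -{1}(setD1K iT) ksignU1 ?inE ?eqxx //.
rewrite !scalerA -scalerDl.
set a := ksign (T :\ i) i; set b := ksign (T :\ i) j.
have -> : sign_of (i < j)%N * b * z j * (sign_of (j < i)%N * a) =
          (sign_of (j < i)%N * sign_of (i < j)%N) * (a * (b * z j)) by ring.
by rewrite sign_of_swap 1?eq_sym // mulN1r addNr scale0r.
Qed.

Lemma koszul_homotopy (i : 'I_n) c T :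
  koszul_d z (wedge i c) T + wedge i (koszul_d z c) T = z i *: c T.
Proof.
rewrite koszul_dE [wedge i _ T]ffunE; case: (boolP (i \in T)) => iT; last first.
  rewrite addr0 (bigD1 i) //= ffunE setU11 setU1K // scalerA mulrAC ksign_sq mul1r.
  rewrite -[RHS]addr0; congr (_ + _); apply: big1 => j /andP[jT ji].
  by rewrite ffunE !inE eq_sym (negbTE ji) (negbTE iT) scaler0.
rewrite koszul_dE [X in _ + _ *: X](bigD1 i) /=; last by rewrite !inE eqxx.
rewrite setD1K // scalerDr addrCA scalerA mulrA ksign_sq mul1r.
rewrite -[RHS]addr0; congr (_ + _); rewrite scaler_sumr.
rewrite [X in _ + X](eq_bigl (fun j : 'I_n => j \notin T)); last first.
  by move=> j; rewrite !inE; case: (j =P i) => [->|_] /=; rewrite ?iT ?andbF ?andbT.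
by rewrite -big_split /=; apply: big1 => j jT; apply: wedge_d_cancel.
Qed.

Lemma koszul_d_is_linear : linear (koszul_d (M:=M) z).
Proof.
move=> a c1 c2; apply/ffunP => T; rewrite !ffunE scaler_sumr -big_split /=.
by apply: eq_bigr => i _; rewrite !ffunE scalerDr !scalerA [_ * a]mulrC.
Qed.

HB.instance Definition _ := GRing.isLinear.Build R {ffun {set 'I_n} -> M}
  {ffun {set 'I_n} -> M} _ (koszul_d z) koszul_d_is_linear.

Lemma koszul_d_wedge i c : koszul_d z c = 0 -> koszul_d z (wedge i c) = z i *: c.
Proof.
move=> dc; apply/ffunP => T; have := koszul_homotopy i c T.
suff -> : wedge i (koszul_d z c) T = 0 by rewrite addr0 => ->; rewrite ffunE.
by rewrite dc ffunE; case: ifP => _; rewrite ?ffunE ?scaler0.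
Qed.

(** If some r = 1 modulo (z) annihilates M, then Kos(z, M) is exact: a cycle
    c equals (1 - r) c = sum_i t_i z_i c = d (sum_i t_i e_i /\ c). *)
Lemma koszul_exact_of_ann (r : R) : gen_ideal z (r - 1) ->
  (forall x : M, r *: x = 0) -> koszul_exact M z.
Proof.
move=> [t ht] ann p c hc dc.
exists (\sum_i (- t i) *: wedge i c); split.
  move=> S hS; rewrite sum_ffunE; apply: big1 => i _; rewrite !ffunE.
  case: ifP => iS; last by rewrite !scaler0.
  rewrite hc ?scaler0 //; apply: contra hS => /eqP h.
  by rewrite (cardsD1 i S) iS h.
rewrite linear_sum.
under eq_bigr do rewrite linearZ /= koszul_d_wedge // scalerA.
rewrite -scaler_suml.
have -> : \sum_i - t i * z i = 1 - r.
  by rewrite -opprB ht -sumrN; apply: eq_bigr => i _; rewrite mulrC mulrN.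
have rc : r *: c = 0 by apply/ffunP => T; rewrite !ffunE ann.
by rewrite scalerBl scale1r rc subr0.
Qed.

Lemma koszul_exact_gen_submod : koszul_exact M z -> forall x : M, gen_submod z x.
Proof.
move=> ex x.
pose c : {ffun {set 'I_n} -> M} := [ffun S => if S == set0 then x else 0].
have hc : homog 0 c.
  by move=> S hS; rewrite ffunE; case: eqP => // S0; move: hS; rewrite S0 cards0.
have dc : koszul_d z c = 0.
  apply/ffunP => T; rewrite koszul_dE ffunE; apply: big1 => i _; rewrite ffunE.
  case: eqP => [h|]; last by rewrite scaler0.
  by have := setU11 i T; rewrite h inE.
have [d [_ hd]] := ex 0%N c hc dc.
exists (fun i => d (i |: set0)).
have : koszul_d z d set0 = c set0 by rewrite hd.
rewrite koszul_dE ffunE eqxx => <-.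
apply: eq_big => [i|i _]; first by rewrite inE.
rewrite /ksign (_ : [set j in set0 | _] = set0) ?cards0 ?expr0 ?mul1r //.
by apply/setP => j; rewrite !inE.
Qed.

End KoszulHomotopy.

Section Nakayama.
Variables (R : comNzRingType) (M : lmodType R) (I : R -> Prop) (L : M -> Prop).
Hypotheses (I_ideal : idealP I) (L_submod : submoduleP L).

(** Elimination form of the determinant trick: if r v_j = sum_l A_jl v_l
    modulo L for all j, with r = 1 and all A_jl = 0 modulo I, then some
    r' = 1 modulo I maps every v_j into L.  Induction eliminates v_0. *)
Lemma nakayama_elim (vs : seq M) (r : R) (A : nat -> nat -> R) :
  I (r - 1) -> (forall j l, I (A j l)) ->
  (forall j, (j < size vs)%N ->
     L (r *: vs`_j - \sum_(l < size vs) A j l *: vs`_l)) ->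
  exists2 r', I (r' - 1) & forall j, (j < size vs)%N -> L (r' *: vs`_j).
Proof.
have [I0 ID IM] := I_ideal; have [_ LD LZ] := L_submod.
elim: vs r A => [|x vs IH] r A hr hA hL; first by exists 1; rewrite ?subrr.
pose u := r - A 0%N 0%N.
pose S0 := \sum_(l < size vs) A 0%N l.+1 *: vs`_l.
have hu : I (u - 1) by rewrite /u addrAC; apply: idealB.
have h0 : L (u *: x - S0).
  have := hL 0%N isT; rewrite /= big_ord_recl /= /u /S0 scalerBl.
  by rewrite opprD addrA.
pose A' j l := u * A j.+1 l.+1 + A j.+1 0%N * A 0%N l.+1.
have [r' hr' hL'] : exists2 r', I (r' - 1) &
    forall j, (j < size vs)%N -> L (r' *: vs`_j).
  apply: (IH (u * r) A').
  - have -> : u * r - 1 = r * (u - 1) + (r - 1) by ring.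
    by apply: ID; first apply: IM.
  - by move=> j l; apply: ID; apply: IM.
  move=> j hj; have := hL j.+1 hj; rewrite /= big_ord_recl /= => hj1.
  have := LD _ _ (LZ u _ hj1) (LZ (A j.+1 0%N) _ h0); congr L.
  have eA (l : 'I_(size vs)) : A' j l *: vs`_l =
      u *: (A j.+1 l.+1 *: vs`_l) + A j.+1 0%N *: (A 0%N l.+1 *: vs`_l).
    by rewrite /A' scalerDl !scalerA.
  rewrite (eq_bigr _ (fun l _ => eA l)) big_split /= -!scaler_sumr -/S0.
  rewrite scalerBr scalerDr scalerBr !scalerA [A j.+1 0%N * u]mulrC -scalerA.
  have rearr (X Y Z W : M) : X - (W + Y) + (W - Z) = X - (Y + Z).
    by rewrite [W + Y]addrC opprD addrA addrA addrNK opprD addrA.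
  exact: rearr.
exists (r' * u).
  have -> : r' * u - 1 = u * (r' - 1) + (u - 1) by ring.
  by apply: ID; first apply: IM.
case=> [|j] hj /=; last by rewrite mulrC -scalerA; apply: LZ; apply: hL'.
have -> : (r' * u) *: x =
    r' *: (u *: x - S0) + \sum_(l < size vs) A 0%N l.+1 *: (r' *: vs`_l).
  have e : r' *: S0 = \sum_(l < size vs) A 0%N l.+1 *: (r' *: vs`_l).
    by rewrite /S0 scaler_sumr; apply: eq_bigr => l _; rewrite !scalerA mulrC.
  by rewrite scalerBr e subrK scalerA.
by apply: LD; [apply: LZ | apply: submod_sum => // l; apply: LZ; apply: hL'].
Qed.

Lemma nakayama (s : seq M) : spanned_by s ->
  (forall x : M, exists2 w, ideal_submod I w & L (x - w)) ->
  exists2 r, I (r - 1) & forall x : M, L (r *: x).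
Proof.
have [I0 _ IM] := I_ideal; have [_ _ LZ] := L_submod.
move=> gen hx.
have hj (j : nat) : exists c : nat -> R, (forall l, I (c l)) /\
    L (1 *: s`_j - \sum_(l < size s) c l *: s`_l).
  have [_ [N [a [m [ha ->]]]] hL] := hx s`_j.
  have [b hb] := boolp.choice (fun i => gen (m i)).
  exists (fun l => if insub l is Some o then \sum_i a i * b i o else 0); split.
    move=> l; case: insub => [o|] //.
    by apply: ideal_sum => // i; rewrite mulrC; apply: IM.
  rewrite scale1r; congr (L (_ - _)): hL; apply: esym.
  under eq_bigr => l _ do rewrite valK scaler_suml.
  rewrite exchange_big /=; apply: eq_bigr => i _.
  by rewrite hb scaler_sumr; apply: eq_bigr => l _; rewrite scalerA.
have [A hA] := boolp.choice hj.
have I1 : I (1 - 1) by rewrite subrr.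
have [r hr hL] := nakayama_elim I1 (fun j => (hA j).1) (fun j _ => (hA j).2).
exists r => // x; have [a ->] := gen x.
rewrite scaler_sumr; apply: submod_sum => // i.
by rewrite scalerA mulrC -scalerA; apply: LZ; apply: hL.
Qed.

End Nakayama.

Lemma koszul_exactP (R : comNzRingType) (M : lmodType R) n (z : 'I_n -> R)
    (s : seq M) :
  spanned_by s -> koszul_exact M z <-> forall x : M, gen_submod z x.
Proof.
move=> gen; split; first exact: koszul_exact_gen_submod.
move=> hz; have zero_submod : submoduleP (fun x : M => x = 0).
  by split=> // [x y -> ->|r x ->]; rewrite ?addr0 ?scaler0.
have [r hr hL] := nakayama (gen_idealP z) zero_submod gen
  (fun x => ex_intro2 _ _ x (gen_submod_ideal_submod (hz x)) (subrr x)).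
exact: koszul_exact_of_ann hr hL.
Qed.

Section MaximalIdeals.
Variables (R : comNzRingType) (J : R -> Prop).
Hypotheses (J_ideal : idealP J) (J1 : ~ J 1).

Definition proper_ideal_above (A : R -> Prop) : Prop :=
  [/\ idealP A, ~ A 1 & forall x, J x -> A x].

Lemma chain_union_proper (F : (R -> Prop) -> Prop) A0 x0 :
  (forall A x, F A -> A x -> proper_ideal_above A) ->
  classical_sets.total_on F classical_sets.subset -> F A0 -> A0 x0 ->
  proper_ideal_above (classical_sets.bigcup F id).
Proof.
move=> FP tot FA0 A0x0; have [[A00 _ _] _ JA0] := FP _ _ FA0 A0x0.
split; last by move=> x Jx; exists A0 => //; apply: JA0.
- split; first by exists A0.
  + move=> a b [A1 FA1 A1a] [A2 FA2 A2b].
    have [[_ A1D _] _ _] := FP _ _ FA1 A1a; have [[_ A2D _] _ _] := FP _ _ FA2 A2b.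
    case: (tot _ _ FA1 FA2) => sub; first by exists A2 => //; apply: A2D => //; apply: sub.
    by exists A1 => //; apply: A1D => //; apply: sub.
  + move=> r a [A1 FA1 A1a]; exists A1 => //.
    by have [[_ _ A1M] _ _] := FP _ _ FA1 A1a; apply: A1M.
- by move=> [A1 FA1 A11]; have [_ A1n1 _] := FP _ _ FA1 A11.
Qed.

(** Krull: J lies in an ideal A that is maximal among proper ideals.  Zorn's
    lemma is applied to the proper ideals above J together with the empty
    set, which bounds the empty chain. *)
Lemma maximal_ideal_above : exists2 A, proper_ideal_above A &
  forall B, proper_ideal_above B -> (forall x, A x -> B x) -> forall x, B x -> A x.
Proof.
pose P A := (forall x, ~ A x) \/ proper_ideal_above A.
have [A [PA Amax]] : exists A, P A /\ forall B, classical_sets.proper A B -> ~ P B.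
  apply: classical_sets.Zorn_bigcup => F FP tot.
  have [[A0 [x0 [FA0 A0x]]]|hno] := boolp.EM (exists A x, F A /\ A x).
    right; apply: (chain_union_proper _ tot FA0 A0x) => A x FA Ax.
    by case: (FP _ FA) => // /(_ x).
  by left=> x [X FX Xx]; apply: hno; exists X, x.
have PJ : proper_ideal_above J by split.
have AJ : proper_ideal_above A.
  case: PA => // hA; exfalso; apply: (Amax J); last by right.
  by split=> [x /hA //|h]; apply: (hA 0); apply: h; case: J_ideal.
exists A => // B PB AB x Bx; apply: boolp.contrapT => nAx.
by apply: (Amax B); [split=> // h; apply: nAx; apply: h | right].
Qed.

End MaximalIdeals.

Lemma maximal_ideal_inv (R : comNzRingType) (J A : R -> Prop) :
  proper_ideal_above J A ->
  (forall B, proper_ideal_above J B -> (forall x, A x -> B x) -> forall x, B x -> A x) ->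
  forall x, ~ A x -> exists y, A (x * y - 1).
Proof.
move=> [[A0 AD AM] A1 JA] Amax x nAx.
pose B z := exists a r, A a /\ z = a + x * r.
apply: boolp.contrapT => hn; apply: nAx; apply: (Amax B); last first.
- by exists 0, 1; rewrite add0r mulr1.
- by move=> z Az; exists z, 0; rewrite mulr0 addr0.
split; last by move=> z Jz; exists z, 0; rewrite mulr0 addr0; split => //; apply: JA.
- split; first by exists 0, 0; rewrite mulr0 addr0.
  + move=> _ _ [a [r [Aa ->]]] [b [s [Ab ->]]]; exists (a + b), (r + s).
    by split; [apply: AD | ring].
  + move=> t _ [a [r [Aa ->]]]; exists (t * a), (t * r).
    by split; [apply: AM | ring].
- move=> [a [r [Aa e]]]; apply: hn; exists r.
  have -> : x * r - 1 = (- 1) * a by rewrite [X in _ - X = _]e; ring.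
  exact: AM.
Qed.

Section ZariskiLemma.
Variable K : fieldType.

Definition in_ring_gen (A : nzRingType) (phi : A -> K) (gs : seq K) (x : K) : Prop :=
  forall P : K -> Prop, (forall a, P (phi a)) -> (forall g, g \in gs -> P g) ->
    (forall u v, P u -> P v -> P (u + v)) ->
    (forall u v, P u -> P v -> P (u * v)) -> P x.

Lemma in_ring_genD (A : nzRingType) (phi : A -> K) gs u v :
  in_ring_gen phi gs u -> in_ring_gen phi gs v -> in_ring_gen phi gs (u + v).
Proof.
move=> hu hv P h1 h2 h3 h4.
by apply: (h3); [apply: hu h1 h2 h3 h4 | apply: hv h1 h2 h3 h4].
Qed.

Lemma in_ring_genM (A : nzRingType) (phi : A -> K) gs u v :
  in_ring_gen phi gs u -> in_ring_gen phi gs v -> in_ring_gen phi gs (u * v).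
Proof.
move=> hu hv P h1 h2 h3 h4.
by apply: (h4); [apply: hu h1 h2 h3 h4 | apply: hv h1 h2 h3 h4].
Qed.

(** x is algebraic over the fraction field of A: some a x, a != 0, is
    integral over A. *)
Definition alg_over (A : idomainType) (phi : {rmorphism A -> K}) (x : K) : Prop :=
  exists2 a : A, a != 0 & integralOver phi (phi a * x).

Section AlgOver.
Variables (A : idomainType) (phi : {rmorphism A -> K}).

Lemma alg_over_phi a : alg_over phi (phi a).
Proof. by exists 1; rewrite ?oner_neq0 // rmorph1 mul1r; apply: integral_id. Qed.

Lemma alg_over_add u v : alg_over phi u -> alg_over phi v -> alg_over phi (u + v).
Proof.
move=> [a an0 ha] [b bn0 hb]; exists (a * b); first exact: mulf_neq0.
have -> : phi (a * b) * (u + v) = phi b * (phi a * u) + phi a * (phi b * v).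
  by rewrite rmorphM; ring.
by apply: integral_add; apply: integral_mul => //; apply: integral_id.
Qed.

Lemma alg_over_mul u v : alg_over phi u -> alg_over phi v -> alg_over phi (u * v).
Proof.
move=> [a an0 ha] [b bn0 hb]; exists (a * b); first exact: mulf_neq0.
have -> : phi (a * b) * (u * v) = (phi a * u) * (phi b * v) by rewrite rmorphM; ring.
exact: integral_mul.
Qed.

(** A root x of a nonzero p over A is algebraic: if p has leading coefficient
    a and degree d + 1, then a x is a root of the monic polynomial
    Y^(d+1) + sum_(i <= d) p_i a^(d-i) Y^i. *)
Lemma root_alg_over (p : {poly A}) x :
  injective phi -> p != 0 -> root (map_poly phi p) x -> alg_over phi x.
Proof.
move=> inj pn0 rx; set a := lead_coef p.
have an0 : a != 0 by rewrite lead_coef_eq0.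
have pha : phi a != 0 by rewrite -(rmorph0 phi) (inj_eq inj).
have sz : size (map_poly phi p) = size p by rewrite size_map_poly_id0.
have [d spd] : exists d, size p = d.+2.
  case sp: (size p) => [|[|d]]; last by exists d.
    by move/eqP: sp; rewrite size_poly_eq0 (negbTE pn0).
  move: rx; rewrite /root horner_coef sz sp big_ord1 expr0 mulr1 coef_map.
  by rewrite (_ : p`_0 = a) ?(negbTE pha) // /a lead_coefE sp.
pose Q := \poly_(i < d.+2) (if i == d.+1 then 1 else p`_i * a ^+ (d - i)).
have mQ : Q \is monic by apply/monicP; rewrite lead_coef_poly //= eqxx ?oner_neq0.
have pa : p`_d.+1 = a by rewrite /a lead_coefE spd.
have scaled : (map_poly phi Q).[phi a * x] = phi a ^+ d * (map_poly phi p).[x].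
  rewrite (horner_coef_wide (n := d.+2)); last first.
    by rewrite size_map_poly_id0 ?size_poly // (monicP mQ) rmorph1 oner_neq0.
  rewrite horner_coef sz spd big_ord_recr [X in _ = _ * X]big_ord_recr /=.
  rewrite !coef_map coef_poly ltnSn eqxx.
  rewrite [X in X * _ ^+ d.+1](_ : _ = 1) ?mul1r; last exact: rmorph1.
  rewrite pa mulrDr; congr (_ + _); last first.
    by rewrite exprMn exprS; ring.
  rewrite mulr_sumr; apply: eq_bigr => i _.
  rewrite coef_map coef_poly ltnS (ltnW (ltn_ord i)) (ltn_eqF (ltn_ord i)).
  rewrite coef_map.
  change (phi (p`_i * a ^+ (d - i)) * (phi a * x) ^+ i =
          phi a ^+ d * (phi p`_i * x ^+ i)).
  rewrite rmorphM rmorphXn exprMn.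
  rewrite [phi a ^+ d](_ : _ = phi a ^+ (d - i) * phi a ^+ i); first by ring.
  by rewrite -exprD subnK // -ltnS.
exists a => //; exists Q => //.
by rewrite /root scaled (rootP rx) mulr0.
Qed.

End AlgOver.

Lemma size_one_addXmul (A : idomainType) (H : {poly A}) :
  H != 0 -> size (1 + 'X * H) = (size H).+1.
Proof.
move=> Hn0; rewrite addrC size_polyDl mulrC size_mulX //.
by rewrite size_poly1 ltnS size_poly_gt0.
Qed.

Lemma one_addXmul_not_unit (A : idomainType) (H V : {poly A}) :
  H != 0 -> (1 + 'X * H) * V != 1.
Proof.
move=> Hn0; apply/eqP => h; have := size_mul_eq1 (1 + 'X * H) V.
by rewrite h size_poly1 eqxx size_one_addXmul // eqSS size_poly_eq0 (negbTE Hn0).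
Qed.

Lemma one_sub_expr (S : comNzRingType) (q : S) m : exists s, (1 - q) ^+ m = 1 + q * s.
Proof.
elim: m => [|m [s hs]]; first by exists 0; rewrite expr0 mulr0 addr0.
by exists (s - 1 - q * s); rewrite exprS hs; ring.
Qed.

(** If h / q is integral over B inside K, then q divides a power of h:
    clear denominators in the integral equation of h / q. *)
Lemma integral_ratio_dvd_pow (B : idomainType) (psi : {rmorphism B -> K}) (h q : B) :
  injective psi -> q != 0 -> integralOver psi (psi h / psi q) ->
  exists D (T : B), h ^+ D = q * T.
Proof.
move=> inj qn0 [P mP rP].
have pqn0 : psi q != 0 by rewrite -(rmorph0 psi) (inj_eq inj).
have szP : size (map_poly psi P) = size P.
  by rewrite size_map_poly_id0 // (monicP mP) rmorph1 oner_neq0.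
set D := (size P).-1.
have sPD : size P = D.+1 by rewrite /D prednK // size_poly_gt0 monic_neq0.
have cleared : \sum_(i < D.+1) P`_i * h ^+ i * q ^+ (D - i) = 0.
  apply: inj; rewrite rmorph0 rmorph_sum.
  move: rP; rewrite /root horner_coef szP sPD => /eqP h0.
  have e : psi q ^+ D * \sum_(i < D.+1) (map_poly psi P)`_i * (psi h / psi q) ^+ i = 0.
    by rewrite h0 mulr0.
  rewrite -[RHS]e mulr_sumr; apply: eq_bigr => i _.
  rewrite coef_map !rmorphM !rmorphXn exprMn exprVn.
  rewrite (exprB (ltnSE (ltn_ord i))) ?unitfE ?expf_neq0 //.
  by ring.
exists D, (- \sum_(i < D) P`_i * h ^+ i * q ^+ (D - i.+1)).
move: cleared; rewrite big_ord_recr /= subnn expr0 mulr1.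
have -> : P`_D = 1 by rewrite -(monicP mP) lead_coefE sPD.
rewrite mul1r addrC => /eqP; rewrite addr_eq0 => /eqP ->.
rewrite mulrN mulr_sumr.
congr (- _); apply: eq_bigr => i _.
by rewrite -(subnSK (ltn_ord i)) exprS; ring.
Qed.

(** The key obstruction: elements of K = A[X]-algebra cannot all become
    integral over A[X] after multiplication by powers of one H != 0, as
    the inverse of 1 + X H shows. *)
Lemma no_common_denominator (A : idomainType) (psi : {rmorphism {poly A} -> K})
    (H : {poly A}) : injective psi -> H != 0 ->
  ~ (forall x, exists N, integralOver psi (psi H ^+ N * x)).
Proof.
move=> inj Hn0 hall; set q := 1 + 'X * H.
have qn0 : q != 0 by rewrite -size_poly_eq0 size_one_addXmul.
have [N hN] := hall (psi q)^-1.
have [D [T hT]] : exists D (T : {poly A}), (H ^+ N) ^+ D = q * T.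
  by apply: (integral_ratio_dvd_pow inj) => //; rewrite rmorphXn.
have [s hs] := one_sub_expr q (N * D).
have e : (1 - q) ^+ (N * D) = (- 'X) ^+ (N * D) * (q * T).
  by rewrite -hT -exprM (_ : 1 - q = - 'X * H) ?exprMn // /q; ring.
have := one_addXmul_not_unit ((- 'X) ^+ (N * D) * T - s) Hn0.
rewrite -/q mulrBr.
have -> : q * ((- 'X) ^+ (N * D) * T) = (- 'X) ^+ (N * D) * (q * T) by ring.
by rewrite -e hs addrK eqxx.
Qed.

Lemma integral_pow_denominator (B : comNzRingType) (psi : {rmorphism B -> K}) gs
    (H : B) : (forall x, in_ring_gen psi gs x) ->
  (forall g, g \in gs -> exists N, integralOver psi (psi H ^+ N * g)) ->
  forall x, exists N, integralOver psi (psi H ^+ N * x).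
Proof.
move=> hgen hgs x.
apply: (hgen x (fun x => exists N, integralOver psi (psi H ^+ N * x))) => //.
- by move=> a; exists 0%N; rewrite expr0 mul1r; apply: integral_id.
- move=> u v [N1 h1] [N2 h2]; exists (N1 + N2)%N.
  have -> : psi H ^+ (N1 + N2) * (u + v) =
      psi (H ^+ N2) * (psi H ^+ N1 * u) + psi (H ^+ N1) * (psi H ^+ N2 * v).
    by rewrite !rmorphXn exprD; ring.
  by apply: integral_add; apply: integral_mul => //; apply: integral_id.
- move=> u v [N1 h1] [N2 h2]; exists (N1 + N2)%N.
  have -> : psi H ^+ (N1 + N2) * (u * v) = (psi H ^+ N1 * u) * (psi H ^+ N2 * v).
    by rewrite exprD; ring.
  exact: integral_mul.
Qed.

(** If the generators are algebraic over Frac B, a single denominator H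
    (the product of theirs) makes every element integral after a power. *)
Lemma alg_over_denominator (B : idomainType) (psi : {rmorphism B -> K}) gs :
  (forall x, in_ring_gen psi gs x) -> (forall g, g \in gs -> alg_over psi g) ->
  exists2 H : B, H != 0 & forall x, exists N, integralOver psi (psi H ^+ N * x).
Proof.
move=> hgen halg.
have denom g : exists c : B, g \in gs -> c != 0 /\ integralOver psi (psi c * g).
  have [gin|gnin] := boolP (g \in gs); last by exists 1 => /negP.
  by have [a an0 ha] := halg g gin; exists a.
have [c hc] := boolp.choice denom.
exists (\prod_(g <- gs) c g).
  by rewrite prodf_seq_neq0; apply/allP => g gin; have [] := hc g gin.
apply: integral_pow_denominator => // g gin; exists 1%N.
rewrite expr1 (big_rem _ gin) /=; set r := \prod_(_ <- rem g gs) _.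
have -> : psi (c g * r) * g = psi r * (psi (c g) * g) by rewrite rmorphM; ring.
by apply: integral_mul; [apply: integral_id | have [] := hc g gin].
Qed.

Lemma horner_transcendental_inj (A : idomainType) (phi : {rmorphism A -> K}) g
    (cfu : commr_rmorph phi g) :
  injective phi -> ~ alg_over phi g -> injective (horner_morph cfu).
Proof.
move=> inj ng p1 p2 e; apply/eqP; rewrite -subr_eq0; apply: contraT => hn.
case: ng; apply: (root_alg_over inj hn).
rewrite /root (_ : (map_poly phi (p1 - p2)).[g] = horner_morph cfu (p1 - p2)) //.
by rewrite rmorphB /= e subrr.
Qed.

Lemma in_ring_gen_adjoin (A : comNzRingType) (phi : {rmorphism A -> K}) gs g
    (cfu : commr_rmorph phi g) : g \in gs ->
  forall x, in_ring_gen phi gs x -> in_ring_gen (horner_morph cfu) (rem g gs) x.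
Proof.
move=> gin x hx; apply: hx.
- by move=> a P h1 _ _ _; rewrite -(horner_morphC cfu); apply: h1.
- move=> h hin; case: (h =P g) => [->|hg] P h1 h2 _ _.
    by rewrite -(horner_morphX cfu); apply: h1.
  apply: h2; move: hin; rewrite (perm_mem (perm_to_rem gin)) inE.
  by case/orP => // /eqP.
- by move=> u v; apply: in_ring_genD.
- by move=> u v; apply: in_ring_genM.
Qed.

(** Induction on the number of generators; a transcendental
    generator would contradict no_common_denominator. *)
Lemma zariski n : forall (A : idomainType) (phi : {rmorphism A -> K}) (gs : seq K),
  injective phi -> size gs = n -> (forall x, in_ring_gen phi gs x) ->
  forall x, alg_over phi x.
Proof.
elim: n => [|n IH] A phi gs inj sz hgen.
  move=> x; apply: (hgen x (alg_over phi)); first exact: alg_over_phi.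
  - by move=> g; rewrite (size0nil sz).
  - exact: alg_over_add.
  - exact: alg_over_mul.
have [[g gin ng]|allalg] := boolp.pselect (exists2 g, g \in gs & ~ alg_over phi g).
  have cfu : commr_rmorph phi g by move=> a; rewrite /GRing.comm mulrC.
  have psi_inj := horner_transcendental_inj (cfu := cfu) inj ng.
  have hgen' := in_ring_gen_adjoin (cfu := cfu) gin.
  have sz' : size (rem g gs) = n by rewrite size_rem // sz.
  have [H Hn0 hH] := alg_over_denominator (fun x => hgen' x (hgen x))
    (fun h _ => IH _ _ _ psi_inj sz' (fun x => hgen' x (hgen x)) h).
  by case: (no_common_denominator psi_inj Hn0 hH).
move=> x; apply: (hgen x (alg_over phi)); first exact: alg_over_phi.
- by move=> g gin; apply: boolp.contrapT => ng; apply: allalg; exists g.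
- exact: alg_over_add.
- exact: alg_over_mul.
Qed.

End ZariskiLemma.

Lemma alg_over_closed (k : closedFieldType) (K : fieldType) (phi : {rmorphism k -> K}) x :
  alg_over phi x -> exists c, x = phi c.
Proof.
move=> [a an0 [p mp rp]].
have [r hr] := closed_field_poly_normal p.
move: rp; rewrite hr (monicP mp) scale1r rmorph_prod /root horner_prod prodf_seq_eq0.
case/hasP => z _ /=; rewrite rmorphB /= map_polyX map_polyC hornerXsubC subr_eq0 => /eqP e.
exists (a^-1 * z); rewrite rmorphM fmorphV -e mulrA mulVf ?mul1r //.
by rewrite fmorph_eq0.
Qed.

Section ResidueField.
Local Open Scope quotient_scope.
Variables (k : closedFieldType) (R : comAlgType k) (A : R -> Prop).
Hypotheses (A_ideal : idealP A) (A1 : ~ A 1)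
  (A_inv : forall x, ~ A x -> exists y, A (x * y - 1)).

(** A as a boolean predicate, to form the quotient ring. *)
Definition ideal_pred : {pred R} := fun x => boolp.asbool (A x).

Lemma ideal_pred_closed : idealr_closed ideal_pred.
Proof.
have [A0 AD AM] := A_ideal.
split; rewrite /ideal_pred ?inE; first exact/boolp.asboolP.
  by apply/negP => /boolp.asboolP.
move=> a u v /boolp.asboolP hu /boolp.asboolP hv; apply/boolp.asboolP.
exact: AD (AM _ _ hu) hv.
Qed.

HB.instance Definition _ := isIdealr.Build R ideal_pred ideal_pred_closed.

Local Notation F := {ideal_quot ideal_pred}.

Lemma residue_eq (x y : R) : (\pi_F x == \pi_F y) = boolp.asbool (A (x - y)).
Proof. by rewrite -(Quotient.idealrBE (ideal_pred : idealr R)). Qed.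

Lemma residue_eq0 (x : R) : (\pi_F x == 0) = boolp.asbool (A x).
Proof. by rewrite -(rmorph0 (\pi_F : {rmorphism R -> F})) residue_eq subr0. Qed.

Definition inv_mod (x : R) : R :=
  if boolp.pselect (exists y, A (x * y - 1)) is left h then sval (boolp.cid h) else 0.

Definition residue_inv (q : F) : F := \pi_F (inv_mod (repr q)).

(** Since A is maximal, R / A is a field. *)
Lemma residue_mulVf (q : F) : q != 0 -> residue_inv q * q = 1.
Proof.
move=> qn0; rewrite /residue_inv /inv_mod.
have nA : ~ A (repr q).
  by move=> h; move: qn0; rewrite -[q]reprK residue_eq0 => /negP; apply; apply/boolp.asboolP.
case: boolp.pselect => [h|h]; last by case: h; apply: A_inv.
case: (boolp.cid h) => y hy /=.
rewrite -[X in _ * X = _]reprK -rmorphM -(rmorph1 (\pi_F : {rmorphism R -> F})).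
by apply/eqP; rewrite residue_eq mulrC; apply/boolp.asboolP.
Qed.

Lemma residue_inv0 : residue_inv 0 = 0.
Proof.
have [_ AD AM] := A_ideal.
rewrite /residue_inv /inv_mod; case: boolp.pselect => [[y hy]|_]; last by rewrite rmorph0.
have : A (repr (0 : F)) by apply/boolp.asboolP; rewrite -residue_eq0 reprK.
move=> h; case: A1.
have -> : (1 : R) = (- 1) * (repr (0 : F) * y - 1) + y * repr (0 : F) by ring.
by apply: AD; apply: AM.
Qed.

HB.instance Definition _ := GRing.ComNzRing_isField.Build F residue_mulVf residue_inv0.

(** If R is generated by gens over k, the residue field R / A is generated
    as a ring over k by their images, so by Zariski's lemma and algebraic
    closedness it is k itself: each y is congruent to a constant. *)
Lemma residue_point : fg_algebra R -> forall y, exists c : k, A (y - c%:A).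
Proof.
move=> [gens hg] y.
pose phi : {rmorphism k -> F} := \pi_F \o in_alg R.
set gs := map \pi_F gens.
have hgen (x : F) : in_ring_gen phi gs x.
  rewrite -[x]reprK; apply: (hg (fun r => in_ring_gen phi gs (\pi_F r))) => //.
    split.
    - move=> P h1 _ _ _; have -> : (1 : R) = in_alg R 1 by rewrite rmorph1.
      exact: (h1 1).
    - by move=> u v hu hv; rewrite rmorphD; apply: in_ring_genD.
    - by move=> u v hu hv; rewrite rmorphM; apply: in_ring_genM.
    - move=> a u hu; rewrite -mulr_algl rmorphM; apply: in_ring_genM => //.
      by move=> P h1 _ _ _; apply: (h1 a).
  by move=> g gin P _ h2 _ _; apply: h2; apply: map_f.
have [c hc] := alg_over_closed (zariski (fmorph_inj phi) (erefl (size gs)) hgen (\pi_F y)).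
by exists c; apply/boolp.asboolP; rewrite -residue_eq hc.
Qed.

End ResidueField.

(** Weak Nullstellensatz: for a proper ideal J of a finitely generated
    algebra over an algebraically closed field and any y, some y - c is
    not invertible modulo J (take c with y = c modulo a maximal A above J). *)
Lemma nullstellensatz_point (k : closedFieldType) (R : comAlgType k) (J : R -> Prop)
    (y : R) : fg_algebra R -> idealP J -> ~ J 1 ->
  exists c : k, forall t, ~ J (1 + (y - c%:A) * t).
Proof.
move=> fgR J_ideal J1.
have [A AJ Amax] := maximal_ideal_above J_ideal J1.
have [A_ideal A1 JA] := AJ; have [_ AD AM] := A_ideal.
have [c hc] := residue_point A_ideal A1 (maximal_ideal_inv AJ Amax) fgR y.
exists c => t /JA h; apply: A1.
have -> : (1 : R) = (1 + (y - c%:A) * t) + (- t) * (y - c%:A) by ring.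
by apply: AD => //; apply: AM.
Qed.

Lemma noetherian_spanned (R : comNzRingType) (M : lmodType R) :
  noetherian_module M -> exists s : seq M, spanned_by s.
Proof.
move=> noeth; have [s hs] : fg_submodule (fun _ : M => True) by apply: noeth.
by exists s => x; apply/hs.
Qed.

Lemma unlift_widen m (i : 'I_m) : unlift ord_max (widen_ord (leqnSn m) i) = Some i.
Proof.
have -> : widen_ord (leqnSn m) i = lift ord_max i by apply: ord_inj; rewrite lift_max.
exact: liftK.
Qed.

Definition ext_last (T : Type) m (b : 'I_m -> T) (c : T) : 'I_m.+1 -> T :=
  fun j => if unlift ord_max j is Some i then b i else c.

Lemma ext_last_widen (T : Type) m (b : 'I_m -> T) c i :
  ext_last b c (widen_ord (leqnSn m) i) = b i.
Proof. by rewrite /ext_last unlift_widen. Qed.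

Lemma ext_last_max (T : Type) m (b : 'I_m -> T) c : ext_last b c ord_max = c.
Proof. by rewrite /ext_last unlift_none. Qed.

Lemma proj_first_ext_last (T : Type) m (b : 'I_m -> T) c :
  proj_first (ext_last b c) = b.
Proof. by apply: boolp.funext => i; apply: ext_last_widen. Qed.

Section LastCoordinate.
Variables (R : comNzRingType) (M : lmodType R) (m : nat) (w : 'I_m.+1 -> R).

Lemma gen_submod_drop_last (x : M) : gen_submod (drop_last w) x -> gen_submod w x.
Proof.
case=> v ->; exists (ext_last v 0).
rewrite big_ord_recr /= ext_last_max scaler0 addr0; apply: eq_bigr => i _.
by rewrite ext_last_widen.
Qed.

Lemma gen_submod_last (x : M) : gen_submod w x ->
  exists v, gen_submod (drop_last w) (x - w ord_max *: v).
Proof.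
case=> v ->; exists (v ord_max).
rewrite big_ord_recr /= addrK; exists (fun i => v (widen_ord (leqnSn m) i)).
by apply: eq_bigr.
Qed.

End LastCoordinate.

Lemma taylor_spectrumP (k : fieldType) (R : comAlgType k) (M : lmodType R) n
    (y : 'I_n -> R) (a : 'I_n -> k) (s : seq M) : spanned_by s ->
  taylor_spectrum M y a <-> ~ (forall x : M, gen_submod (shift_tuple y a) x).
Proof. by move=> gen; rewrite /taylor_spectrum (koszul_exactP _ gen). Qed.

(** J = {r | r M in z M} is a proper ideal, so the Nullstellensatz
    gives c with u - c non-invertible modulo J; if M = z M + (u - c) M,
    Nakayama would put some r = 1 + (u - c) t in J. *)
Lemma extend_non_exact (k : closedFieldType) (R : comAlgType k) (M : lmodType R) n
    (z : 'I_n -> R) (u : R) (s : seq M) : fg_algebra R -> spanned_by s ->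
  ~ (forall x : M, gen_submod z x) ->
  exists c : k, ~ (forall x : M, exists v, gen_submod z (x - (u - c%:A) *: v)).
Proof.
move=> fgR gen nz; have [L0 LD LZ] := gen_submodP M z.
pose J r := forall x : M, gen_submod z (r *: x).
have J_ideal : idealP J.
  split=> [x|a b ha hb x|r a ha x]; first by rewrite scale0r.
  - by rewrite scalerDl; apply: LD.
  - by rewrite -scalerA; apply: LZ.
have J1 : ~ J 1 by move=> h; apply: nz => x; rewrite -[x]scale1r.
have [c hc] := nullstellensatz_point u fgR J_ideal J1.
exists c => hx; pose uc := fun _ : 'I_1 => u - c%:A.
have hIL (x : M) : exists2 w, ideal_submod (gen_ideal uc) w & gen_submod z (x - w).
  have [v hv] := hx x; exists ((u - c%:A) *: v) => //.
  by apply: gen_submod_ideal_submod; exists (fun _ => v); rewrite big_ord1.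
have [r [t ht] hr] := nakayama (gen_idealP uc) (gen_submodP M z) gen hIL.
apply: (hc (t ord0)); move: ht; rewrite big_ord1 => ht.
by rewrite -ht addrC subrK.
Qed.

Lemma drop_last_shift_ext (k : fieldType) (R : comAlgType k) m (y : 'I_m.+1 -> R)
    (b : 'I_m -> k) c :
  drop_last (shift_tuple y (ext_last b c)) = shift_tuple (drop_last y) b.
Proof. by apply: boolp.funext => i; rewrite /drop_last /shift_tuple ext_last_widen. Qed.

Unset Implicit Arguments.
Set Strict Implicit.

(** The paper's m is m.+1 here: y = (y_1, .., y_(m+1)), y' = drop_last y. *)
Theorem theorem2p11 (k : closedFieldType) (R : comAlgType k) (M : lmodType R)
    (m : nat) (y : 'I_m.+1 -> R) :
  fg_algebra R -> noetherian_module M ->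
  forall b : 'I_m -> k,
    taylor_spectrum M (drop_last y) b <->
    exists a : 'I_m.+1 -> k, taylor_spectrum M y a /\ proj_first a = b.
Proof.
move=> fgR noeth b; have [s gen] := noetherian_spanned noeth.
rewrite (taylor_spectrumP _ _ gen); split; last first.
  move=> [a [/(taylor_spectrumP _ _ gen) na <-]] exact'; apply: na => x.
  exact: (gen_submod_drop_last (w := shift_tuple y a) (exact' x)).
move=> nb; have [c hc] := extend_non_exact (y ord_max) fgR gen nb.
exists (ext_last b c); split; last exact: proj_first_ext_last.
apply/(taylor_spectrumP _ _ gen) => exact'; apply: hc => x.
have := gen_submod_last (exact' x).
by rewrite drop_last_shift_ext /shift_tuple ext_last_max.
Qed.
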